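(* Let $T$ be a tree with a proper 2-coloring $\chi:V\to\{\mathcal{R},\mathcal{B}\}$. The following are equivalent: (1) $T$ is balanced; (2) any two vertices of the same height have the same color under $\chi$; (3) every leaf has the same color.
   Context: A leaf is a vertex of degree 1; the height of a vertex is its minimum distance to a leaf (an isolated vertex has height 0). $T$ is balanced if no two adjacent vertices have the same height. A proper 2-coloring assigns different colors to adjacent vertices. *)

From mathcomp Require Import all_boot.
Set Implicit Arguments. Unset Strict Implicit. Unset Printing Implicit Defensive.

Section Graph.
Variables (T : finType) (e : rel T).

Definition simple_graph : Prop := symmetric e /\ irreflexive e.

Definition connected_graph : Prop := forall x y : T, connect e x y.

Definition acyclic_graph : Prop := forall c : seq T, 3 <= size c -> ~~ ucycleb e c.

Definition is_tree : Prop := [/\ simple_graph, connected_graph & acyclic_graph].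

Definition deg (x : T) : nat := #|[set y | e x y]|.
Definition leaf (x : T) : bool := deg x == 1.

Fixpoint reach (n : nat) (x y : T) : bool :=
  if n is n'.+1 then [exists z, reach n' x z && e z y] else x == y.

(* distance: least n < #|T| with a walk of length n (in a connected graph,
   this is the usual shortest-path distance) *)
Definition dist (x y : T) : nat := find (fun n => reach n x y) (iota 0 #|T|).

Definition height (v : T) : nat :=
  if deg v == 0 then 0 else \big[minn/#|T|]_(l | leaf l) dist v l.

Definition balanced : Prop := forall x y : T, e x y -> height x <> height y.

(* proper 2-coloring with colors bool (true = R, false = B) *)
Definition proper_2coloring (chi : T -> bool) : Prop :=
  forall x y : T, e x y -> chi x <> chi y.

End Graph.

From mathcomp Require Import all_boot order.
Import Order.TTheory.

(* Heights change by at most one along an edge: a shortest walk from a neighbour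
   to its nearest leaf extends by that edge.  In a balanced tree they therefore
   change by exactly one, so [chi v (+) odd (height v)] is constant along edges,
   hence on the whole connected tree.  Conversely, if every leaf has colour c,
   then [chi v = c (+) odd (height v)], because v reaches its nearest leaf by a
   walk of length [height v].  Acyclicity is needed only to produce a leaf, the
   endpoint of a maximal path, as soon as the tree has an edge. *)

Set Implicit Arguments.
Unset Strict Implicit.
Unset Printing Implicit Defensive.

Section Walks.
Variables (T : finType) (e : rel T).

Lemma reach_path x p : path e x p -> reach e (size p) x (last x p).
Proof.
elim/last_ind: p => [|p z IHp]; first by rewrite /= eqxx.
rewrite rcons_path size_rcons last_rcons => /andP[xp_path ez].
by apply/existsP; exists (last x p); rewrite ez andbT; apply: IHp.
Qed.

Lemma reach_cons w x y n : e w x -> reach e n x y -> reach e n.+1 w y.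
Proof.
move=> ewx; elim: n y => [|n IHn] y /=.
  by move/eqP <-; apply/existsP; exists w; rewrite eqxx.
case/existsP=> z /andP[xz ezy]; apply/existsP; exists z.
by rewrite ezy andbT; apply: IHn.
Qed.

Lemma connect_reach x y : connect e x y -> exists2 n, n < #|T| & reach e n x y.
Proof.
case/connectP=> p xp_path ->; have [q xq_path xq_uniq _] := shortenP xp_path.
exists (size q); last exact: reach_path.
by change (size (x :: q) <= #|T|); rewrite -(card_uniqP xq_uniq) max_card.
Qed.

Lemma dist_le n x y : reach e n x y -> dist e x y <= n.
Proof.
move=> xy_n; rewrite /dist; have [ltnT|] := ltnP n #|T|; last first.
  by apply: leq_trans; rewrite -[X in _ <= X](size_iota 0) find_size.
rewrite leqNgt; apply/negP => /(before_find 0).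
by rewrite nth_iota // add0n xy_n.
Qed.

Lemma dist_le_card x y : dist e x y <= #|T|.
Proof. by rewrite /dist -[X in _ <= X](size_iota 0) find_size. Qed.

Lemma reach_dist x y : connect e x y -> reach e (dist e x y) x y.
Proof.
case/connect_reach=> n ltnT xy_n.
have has_reach : has (fun m => reach e m x y) (iota 0 #|T|).
  by apply/hasP; exists n; rewrite ?mem_iota.
have := nth_find 0 has_reach; rewrite nth_iota //.
by rewrite -[X in _ < X](size_iota 0) -has_find.
Qed.

Lemma proper_2coloringE (chi : T -> bool) x y :
  proper_2coloring e chi -> e x y -> chi y = ~~ chi x.
Proof. by move=> chi_proper /chi_proper; case: (chi x); case: (chi y). Qed.

Lemma proper_2coloring_reach (chi : T -> bool) n x y :
  proper_2coloring e chi -> reach e n x y -> chi y = chi x (+) odd n.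
Proof.
move=> chi_proper; elim: n y => [|n IHn] y /=; first by move/eqP->; rewrite addbF.
case/existsP=> z /andP[/IHn chi_z /(proper_2coloringE chi_proper)->].
by rewrite chi_z addbN.
Qed.

Lemma deg_gt0P x : reflect (exists y, e x y) (0 < deg e x).
Proof.
by apply: (iffP card_gt0P) => -[y]; rewrite ?inE => exy; exists y; rewrite ?inE.
Qed.

Lemma connected_isolated x y : connected_graph e -> deg e x = 0 -> x = y.
Proof.
move=> e_conn degx; have /connectP[[|z p] /= xp_path ->] := e_conn x y => //.
case/andP: xp_path => exz _.
have /deg_gt0P : exists y, e x y by exists z.
by rewrite degx.
Qed.

End Walks.

Section Leaves.
Variables (T : finType) (e : rel T).
Hypotheses (e_sym : symmetric e) (e_irr : irreflexive e) (e_acyclic : acyclic_graph e).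

Lemma nonleaf_other_neighbor z w :
  e z w -> ~~ leaf e z -> exists2 u, e z u & u != w.
Proof.
move=> ezw; case: (pickP [pred u | e z u & u != w]) => [u /andP[] | none].
  by exists u.
rewrite /leaf /deg (_ : [set u | e z u] = [set w]) ?cards1 //.
apply/setP=> u; rewrite !inE; apply/idP/eqP=> [ezu | -> //].
by apply/eqP; move: (none u) => /=; rewrite ezu => /negbFE.
Qed.

Lemma uniq_path_no_chord z w q u :
  e z u -> path e z (w :: q) -> uniq [:: z, w & q] -> u \notin q.
Proof.
move=> ezu zwq_path zwq_uniq; apply/negP => uq; move: zwq_path zwq_uniq.
case/splitPr: uq => p1 p2 zwq_path zwq_uniq.
have cycle_size : 3 <= size [:: z, w & rcons p1 u] by rewrite /= size_rcons.
move/negP: (e_acyclic cycle_size); apply; apply/andP; split.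
  move: zwq_path => /= /andP[-> ]; rewrite cat_path => /andP[p1_path /andP[ep1u _]].
  by rewrite !rcons_path p1_path ep1u last_rcons e_sym.
by move: zwq_uniq; rewrite -cat_rcons -!cat_cons cat_uniq => /andP[].
Qed.

Lemma exists_leaf x y : e x y -> exists l, leaf e l.
Proof.
move=> exy.
suff grow q z w : path e z (w :: q) -> uniq [:: z, w & q] -> exists l, leaf e l.
  apply: (grow [::] y x); first by rewrite /= (e_sym y) exy.
  by rewrite /= inE andbT; apply: contraTneq exy => ->; rewrite e_irr.
have [n] := ubnP (#|T| - size q); elim: n => // n IHn in q z w *.
rewrite ltnS => size_bound zwq_path zwq_uniq.
have ezw : e z w by case/andP: zwq_path.
have [|nonleaf_z] := boolP (leaf e z); first by exists z.
have [u ezu uw] := nonleaf_other_neighbor ezw nonleaf_z.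
have uq : u \notin q := uniq_path_no_chord ezu zwq_path zwq_uniq.
have uz : u != z by apply: contraTneq ezu => ->; rewrite e_irr.
have uzwq_uniq : uniq [:: u, z, w & q].
  by rewrite cons_uniq zwq_uniq !inE (negbTE uz) (negbTE uw) (negbTE uq).
have size_lt : #|T| - size (w :: q) < n.
  have := max_card (mem [:: u, z, w & q]); rewrite (card_uniqP uzwq_uniq) => size_le.
  by rewrite subnS (leq_trans _ size_bound) // ltn_predL subn_gt0 (ltnW (ltnW size_le)).
by apply: (IHn _ u z size_lt _ uzwq_uniq); apply/andP; rewrite e_sym.
Qed.

End Leaves.

Section Height.
Variables (T : finType) (e : rel T).

Lemma height_le_dist v l : deg e v != 0 -> leaf e l -> height e v <= dist e v l.
Proof.
by move=> degv ll; rewrite /height (negbTE degv); apply: (@bigmin_le_cond _ nat).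
Qed.

Lemma height_eq_dist v l0 :
  deg e v != 0 -> leaf e l0 -> exists2 l, leaf e l & height e v = dist e v l.
Proof.
move=> degv ll0; rewrite /height (negbTE degv).
have dist_bounded l : leaf e l -> dist e v l <= #|T| by rewrite dist_le_card.
by have [l ll ->] := @eq_bigmin _ nat _ #|T| _ _ (dist e v) ll0 dist_bounded; exists l.
Qed.

Lemma height_leaf l : leaf e l -> height e l = 0.
Proof.
move=> ll; have degl : deg e l != 0 by move: ll => /eqP ->.
apply/eqP; rewrite -leqn0 (leq_trans (height_le_dist degl ll)) //.
by apply: (@dist_le _ _ 0); rewrite /= eqxx.
Qed.

End Height.

Section Tree.
Variables (T : finType) (e : rel T) (chi : T -> bool).
Hypotheses (e_tree : is_tree e) (chi_proper : proper_2coloring e chi).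

Let e_sym : symmetric e. Proof. by case: e_tree => -[]. Qed.
Let e_irr : irreflexive e. Proof. by case: e_tree => -[]. Qed.
Let e_conn : connected_graph e. Proof. by case: e_tree. Qed.
Let e_acyclic : acyclic_graph e. Proof. by case: e_tree. Qed.

Lemma height_edge_le u v : e u v -> height e u <= (height e v).+1.
Proof.
move=> euv; have evu : e v u by rewrite e_sym.
have degu : deg e u != 0 by rewrite -lt0n; apply/deg_gt0P; exists v.
have degv : deg e v != 0 by rewrite -lt0n; apply/deg_gt0P; exists u.
have [l0 ll0] := exists_leaf e_sym e_irr e_acyclic euv.
have [l ll ->] := height_eq_dist degv ll0.
apply: leq_trans (height_le_dist degu ll) _; apply: dist_le.
exact: reach_cons euv (reach_dist (e_conn v l)).
Qed.

Lemma balanced_edge_odd_height u v :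
  balanced e -> e u v -> odd (height e v) = ~~ odd (height e u).
Proof.
move=> e_bal euv; have hu_le := height_edge_le euv.
have hv_le : height e v <= (height e u).+1 by apply: height_edge_le; rewrite e_sym.
move: (e_bal u v euv).
case: (ltngtP (height e u) (height e v)) => [hu_lt | hv_lt | -> /(_ erefl) //] _.
  by have /eqP-> : height e v == (height e u).+1 by rewrite eqn_leq hv_le hu_lt.
have /eqP-> : height e u == (height e v).+1 by rewrite eqn_leq hu_le hv_lt.
by rewrite /= negbK.
Qed.

Lemma balanced_height_colors :
  balanced e -> forall x y, height e x = height e y -> chi x = chi y.
Proof.
move=> e_bal x y hxy.
pose parity := [pred v | chi v (+) odd (height e v)].
have parity_closed : closed e parity.
  move=> u v euv; rewrite !inE (proper_2coloringE chi_proper euv).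
  by rewrite (balanced_edge_odd_height e_bal euv) addbN addNb negbK.
move: (closed_connect parity_closed (e_conn x y)).
by rewrite !inE hxy => /addIb.
Qed.

Lemma leaf_colors_height_parity v l0 :
  (forall l l', leaf e l -> leaf e l' -> chi l = chi l') ->
  deg e v != 0 -> leaf e l0 -> chi v = chi l0 (+) odd (height e v).
Proof.
move=> leaf_colors degv ll0; have [l ll ->] := height_eq_dist degv ll0.
rewrite -(leaf_colors l l0 ll ll0).
by rewrite (proper_2coloring_reach chi_proper (reach_dist (e_conn v l))) addbK.
Qed.

Lemma leaf_colors_height_colors :
  (forall l l', leaf e l -> leaf e l' -> chi l = chi l') ->
  forall x y, height e x = height e y -> chi x = chi y.
Proof.
move=> leaf_colors x y hxy.
have [degx0 | degx] := eqVneq (deg e x) 0.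
  by rewrite (connected_isolated y e_conn degx0).
have [degy0 | degy] := eqVneq (deg e y) 0.
  by rewrite (connected_isolated x e_conn degy0).
have /deg_gt0P[z exz] : 0 < deg e x by rewrite lt0n.
have [l0 ll0] := exists_leaf e_sym e_irr e_acyclic exz.
rewrite (leaf_colors_height_parity leaf_colors degx ll0).
by rewrite (leaf_colors_height_parity leaf_colors degy ll0) hxy.
Qed.

End Tree.

Theorem proposition3p17 (T : finType) (e : rel T) (chi : T -> bool) :
  is_tree e -> proper_2coloring e chi ->
  (balanced e <-> (forall x y : T, height e x = height e y -> chi x = chi y)) /\
  ((forall x y : T, height e x = height e y -> chi x = chi y) <->
   (forall l l' : T, leaf e l -> leaf e l' -> chi l = chi l')).
Proof.
move=> e_tree chi_proper; split; split.
- exact: balanced_height_colors.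
- by move=> height_colors x y exy /height_colors; apply: chi_proper.
- by move=> height_colors l l' ll ll'; apply: height_colors; rewrite !height_leaf.
- exact: leaf_colors_height_colors.
Qed.
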